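(* Let $\triangle ABC$ be isosceles with base angles $\angle A=\angle B=80^\circ$ (so $\angle C=20^\circ$). For each side of $\triangle ABC$, consider an equilateral triangle of largest area contained in the closed triangle $\triangle ABC$ having one of its sides lying on that side. Then these three largest equilateral triangles (one for each of the sides $BC$, $CA$, $AB$) are congruent.
   Context: An equilateral triangle of largest area contained in $\triangle ABC$ with one side lying on a given side of $\triangle ABC$ is called the wedged equilateral triangle (WET) on that side; it need not have all three vertices on the boundary of $\triangle ABC$. *)

From Stdlib Require Import Reals Lra.
Open Scope R_scope.

Definition pt := (R * R)%type.

Definition dist (P Q : pt) : R :=
  sqrt ((fst P - fst Q) ^ 2 + (snd P - snd Q) ^ 2).

Definition cross (P Q S : pt) : R :=
  (fst Q - fst P) * (snd S - snd P) - (snd Q - snd P) * (fst S - fst P).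

Definition area (P Q S : pt) : R := Rabs (cross P Q S) / 2.

Definition angle (P V Q : pt) : R :=
  acos (((fst P - fst V) * (fst Q - fst V) + (snd P - snd V) * (snd Q - snd V))
        / (dist V P * dist V Q)).

Definition tri_region (P Q S : pt) (X : pt) : Prop :=
  exists a b c : R, 0 <= a /\ 0 <= b /\ 0 <= c /\ a + b + c = 1 /\
    fst X = a * fst P + b * fst Q + c * fst S /\
    snd X = a * snd P + b * snd Q + c * snd S.

Definition segment (P Q : pt) (X : pt) : Prop :=
  exists t : R, 0 <= t <= 1 /\
    fst X = (1 - t) * fst P + t * fst Q /\
    snd X = (1 - t) * snd P + t * snd Q.

Definition equilateral (P Q S : pt) : Prop :=
  0 < dist P Q /\ dist P Q = dist Q S /\ dist Q S = dist S P.

Definition wedged_candidate (A B C U V P Q S : pt) : Prop :=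
  equilateral P Q S /\
  (forall X, tri_region P Q S X -> tri_region A B C X) /\
  segment U V P /\ segment U V Q.

Definition WET (A B C U V P Q S : pt) : Prop :=
  wedged_candidate A B C U V P Q S /\
  forall P' Q' S', wedged_candidate A B C U V P' Q' S' ->
    area P' Q' S' <= area P Q S.

Definition congruent (P Q S P' Q' S' : pt) : Prop :=
  let d1 := dist P Q in let d2 := dist Q S in let d3 := dist S P in
  exists X Y Z : pt,
    ((X, Y, Z) = (P', Q', S') \/ (X, Y, Z) = (P', S', Q') \/
     (X, Y, Z) = (Q', P', S') \/ (X, Y, Z) = (Q', S', P') \/
     (X, Y, Z) = (S', P', Q') \/ (X, Y, Z) = (S', Q', P')) /\
    d1 = dist X Y /\ d2 = dist Y Z /\ d3 = dist Z X.

(* An equilateral triangle of side s has area (sqrt 3 / 4) s^2, so a WET on a side is a wedged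
   equilateral triangle of largest side.  Move the side UV by an isometry onto [0, a] on the
   x-axis, with the third vertex W above it.  If the angle at U is at least 60 degrees, a wedged
   triangle can be slid along the axis towards U, so the largest side is the largest s <= a for
   which the apex (s/2, s sqrt 3 / 2) of the triangle on [0, s] is not beyond the line VW.
   In the 80-80-20 triangle with legs b and base c = 2 b cos 80, every side has an adjacent
   80 degree angle and the answer is c each time: on the base because c = a, on a leg because
   the apex of the triangle of side c erected at the base vertex lies exactly on the other leg,
   which is the identity sin 80 (1 - cos 80) = (sqrt 3 / 2) (1 - 2 cos^2 80). *)

From Stdlib Require Import Reals Lra Psatz.
Open Scope R_scope.

(** * Distances, angles and areas *)

Definition dotp (V P Q : pt) : R :=
  (fst P - fst V) * (fst Q - fst V) + (snd P - snd V) * (snd Q - snd V).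

Lemma dist_sqr P Q : dist P Q ^ 2 = (fst P - fst Q) ^ 2 + (snd P - snd Q) ^ 2.
Proof. apply pow2_sqrt, Rplus_le_le_0_compat; apply pow2_ge_0. Qed.

Lemma dist_ge0 P Q : 0 <= dist P Q.
Proof. apply sqrt_pos. Qed.

Lemma dist_sym P Q : dist P Q = dist Q P.
Proof. unfold dist; f_equal; ring. Qed.

Lemma sqr_inj x y : 0 <= x -> 0 <= y -> x ^ 2 = y ^ 2 -> x = y.
Proof. intros; nra. Qed.

Lemma sqrt3_sqr : sqrt 3 ^ 2 = 3.
Proof. apply pow2_sqrt; lra. Qed.

Lemma sqrt3_gt0 : 0 < sqrt 3.
Proof. apply sqrt_lt_R0; lra. Qed.

Lemma dotp_cross_sqr V P Q :
  dotp V P Q ^ 2 + cross V P Q ^ 2 = dist V P ^ 2 * dist V Q ^ 2.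
Proof. rewrite !dist_sqr; unfold dotp, cross; ring. Qed.

Lemma dist_gt0_of_cross P Q S : cross P Q S <> 0 -> 0 < dist P Q.
Proof.
  intros Hc; destruct (dist_ge0 P Q) as [|E]; [assumption|].
  pose proof (dotp_cross_sqr P Q S) as L; rewrite <- E in L.
  exfalso; apply Hc; nra.
Qed.

Lemma angle_sym P V Q : angle P V Q = angle Q V P.
Proof. unfold angle; rewrite (Rmult_comm (dist V P)); f_equal; f_equal; ring. Qed.

Lemma cos_angle_arg_bound P V Q : 0 < dist V P -> 0 < dist V Q ->
  -1 <= dotp V P Q / (dist V P * dist V Q) <= 1.
Proof.
  intros HP HQ.
  assert (Hd : 0 < dist V P * dist V Q) by (apply Rmult_lt_0_compat; assumption).
  set (z := dotp V P Q / (dist V P * dist V Q)).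
  assert (Hdotp : dotp V P Q = z * (dist V P * dist V Q)) by (unfold z; field; lra).
  pose proof (dotp_cross_sqr V P Q) as L; rewrite Hdotp in L.
  assert (Hz2 : z ^ 2 <= 1).
  { apply Rmult_le_reg_r with ((dist V P * dist V Q) ^ 2); [apply pow_lt; lra|]. nra. }
  split; nra.
Qed.

Lemma dotp_angle P V Q : 0 < dist V P -> 0 < dist V Q ->
  dotp V P Q = dist V P * dist V Q * cos (angle P V Q).
Proof.
  intros HP HQ; unfold angle; fold (dotp V P Q).
  rewrite cos_acos by (apply cos_angle_arg_bound; assumption).
  field; split; lra.
Qed.

Lemma abs_cross_angle P V Q : 0 < dist V P -> 0 < dist V Q ->
  Rabs (cross V P Q) = dist V P * dist V Q * sin (angle P V Q).
Proof.
  intros HP HQ; unfold angle; fold (dotp V P Q).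
  pose proof (cos_angle_arg_bound P V Q HP HQ) as Hz.
  set (z := dotp V P Q / (dist V P * dist V Q)) in *.
  assert (Hdotp : dotp V P Q = z * (dist V P * dist V Q)) by (unfold z; field; lra).
  assert (Hz2 : 0 <= 1 - z²) by (unfold Rsqr; nra).
  rewrite sin_acos by assumption.
  apply sqr_inj.
  - apply Rabs_pos.
  - apply Rmult_le_pos; [nra|apply sqrt_pos].
  - rewrite pow2_abs, Rpow_mult_distr, pow2_sqrt by assumption.
    pose proof (dotp_cross_sqr V P Q) as L; rewrite Hdotp in L.
    unfold Rsqr; nra.
Qed.

Lemma dotp_law_of_cosines P Q S :
  2 * dotp P Q S = dist P Q ^ 2 + dist P S ^ 2 - dist Q S ^ 2.
Proof. rewrite !dist_sqr; unfold dotp; ring. Qed.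

Lemma area_equilateral P Q S : equilateral P Q S ->
  area P Q S = dist P Q ^ 2 * sqrt 3 / 4.
Proof.
  intros [_ [E1 E2]].
  set (s := dist P Q) in *.
  assert (Hdotp : 2 * dotp P Q S = s ^ 2)
    by (rewrite dotp_law_of_cosines, (dist_sym P S); fold s; rewrite <- E2, <- E1; ring).
  pose proof (dotp_cross_sqr P Q S) as L.
  rewrite (dist_sym P S) in L; fold s in L; rewrite <- E2, <- E1 in L.
  assert (Hcross : Rabs (cross P Q S) = s ^ 2 * sqrt 3 / 2).
  { apply sqr_inj; [apply Rabs_pos| |].
    - pose proof sqrt3_gt0; pose proof (pow2_ge_0 s); nra.
    - rewrite pow2_abs; replace ((s ^ 2 * sqrt 3 / 2) ^ 2) with (s ^ 4 * sqrt 3 ^ 2 / 4) by field.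
      rewrite sqrt3_sqr; nra. }
  unfold area; rewrite Hcross; field.
Qed.

Lemma equilateral_area_le_iff x y : 0 <= x -> 0 <= y ->
  x ^ 2 * sqrt 3 / 4 <= y ^ 2 * sqrt 3 / 4 <-> x <= y.
Proof.
  intros Hx Hy; pose proof sqrt3_gt0.
  split; intros Hle.
  - assert (x ^ 2 <= y ^ 2) by (apply Rmult_le_reg_r with (sqrt 3 / 4); lra). nra.
  - apply Rmult_le_compat_r; [lra|]. apply Rmult_le_compat_r; [lra|]. nra.
Qed.

(** * Wedged triangles and isometries *)

Lemma tri_region_rotate A B C X : tri_region A B C X <-> tri_region B C A X.
Proof. split; intros [a [b [c H]]]; [exists b, c, a | exists c, a, b]; lra. Qed.

Lemma tri_region_swap A B C X : tri_region A B C X <-> tri_region A C B X.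
Proof. split; intros [a [b [c H]]]; exists a, c, b; lra. Qed.

Lemma tri_region_cross P Q S X : 0 < cross P Q S ->
  tri_region P Q S X <-> 0 <= cross P Q X /\ 0 <= cross Q S X /\ 0 <= cross S P X.
Proof.
  intros HD; split.
  - intros [a [b [c [Ha [Hb [Hc [Hs [Hx Hy]]]]]]]].
    assert (cross P Q X = c * cross P Q S) by (unfold cross; rewrite Hx, Hy; nra).
    assert (cross Q S X = a * cross P Q S) by (unfold cross; rewrite Hx, Hy; nra).
    assert (cross S P X = b * cross P Q S) by (unfold cross; rewrite Hx, Hy; nra).
    nra.
  - intros [H1 [H2 H3]].
    exists (cross Q S X / cross P Q S), (cross S P X / cross P Q S), (cross P Q X / cross P Q S).
    repeat split;
      try (apply Rmult_le_pos; [assumption | left; apply Rinv_0_lt_compat, HD]);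
      unfold cross; field; unfold cross in HD; lra.
Qed.

Lemma tri_region_sub A B C P Q S X :
  tri_region A B C P -> tri_region A B C Q -> tri_region A B C S ->
  tri_region P Q S X -> tri_region A B C X.
Proof.
  intros [a1 [b1 [c1 [? [? [? [E1 [HP1 HP2]]]]]]]] [a2 [b2 [c2 [? [? [? [E2 [HQ1 HQ2]]]]]]]]
         [a3 [b3 [c3 [? [? [? [E3 [HS1 HS2]]]]]]]] [a [b [c [? [? [? [E [HX1 HX2]]]]]]]].
  exists (a * a1 + b * a2 + c * a3), (a * b1 + b * b2 + c * b3), (a * c1 + b * c2 + c * c3).
  repeat split; nra.
Qed.

Lemma segment_sym P Q X : segment P Q X -> segment Q P X.
Proof. intros [t H]; exists (1 - t); lra. Qed.

Definition affine_map (h : pt -> pt) : Prop :=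
  exists m11 m12 m21 m22 t1 t2 : R, forall X,
    h X = (m11 * fst X + m12 * snd X + t1, m21 * fst X + m22 * snd X + t2).

Definition isometry (h : pt -> pt) : Prop := forall P Q, dist (h P) (h Q) = dist P Q.

Lemma tri_region_affine h P Q S X : affine_map h ->
  tri_region P Q S X -> tri_region (h P) (h Q) (h S) (h X).
Proof.
  intros [m11 [m12 [m21 [m22 [t1 [t2 Hh]]]]]] [a [b [c [Ha [Hb [Hc [Hs [Hx Hy]]]]]]]].
  exists a, b, c; rewrite !Hh; simpl.
  assert (c = 1 - a - b) by lra; subst c.
  repeat split; try lra; rewrite Hx, Hy; ring.
Qed.

Lemma segment_affine h P Q X : affine_map h -> segment P Q X -> segment (h P) (h Q) (h X).
Proof.
  intros [m11 [m12 [m21 [m22 [t1 [t2 Hh]]]]]] [t [Ht [Hx Hy]]].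
  exists t; rewrite !Hh; simpl.
  repeat split; try lra; rewrite Hx, Hy; ring.
Qed.

Lemma isometry_inverse h k : isometry h -> (forall Y, h (k Y) = Y) -> isometry k.
Proof. intros Hh Hhk P Q; rewrite <- (Hh (k P) (k Q)), !Hhk; reflexivity. Qed.

Section Transport.

Variables h k : pt -> pt.
Hypotheses (Hh : affine_map h) (Hk : affine_map k) (Hiso : isometry h)
  (Hkh : forall X, k (h X) = X) (Hhk : forall Y, h (k Y) = Y).

Lemma wedged_candidate_map A B C U V P Q S :
  wedged_candidate A B C U V P Q S ->
  wedged_candidate (h A) (h B) (h C) (h U) (h V) (h P) (h Q) (h S).
Proof.
  intros [[E1 [E2 E3]] [Hsub [HP HQ]]].
  split; [|split; [|split]].
  - unfold equilateral; rewrite !Hiso; auto.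
  - intros Y HY; rewrite <- (Hhk Y); apply tri_region_affine; [assumption|].
    apply Hsub; rewrite <- (Hkh P), <- (Hkh Q), <- (Hkh S).
    apply tri_region_affine; assumption.
  - apply segment_affine; assumption.
  - apply segment_affine; assumption.
Qed.

End Transport.

Definition max_wedged_side (A B C U V : pt) (s : R) : Prop :=
  (exists P Q S, wedged_candidate A B C U V P Q S /\ dist P Q = s) /\
  (forall P Q S, wedged_candidate A B C U V P Q S -> dist P Q <= s).

Lemma max_wedged_side_map h k A B C U V s :
  affine_map h -> affine_map k -> isometry h ->
  (forall X, k (h X) = X) -> (forall Y, h (k Y) = Y) ->
  max_wedged_side (h A) (h B) (h C) (h U) (h V) s -> max_wedged_side A B C U V s.
Proof.
  intros Hh Hk Hiso Hkh Hhk [[P [Q [S [HPQS Hs]]]] Hmax].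
  pose proof (isometry_inverse h k Hiso Hhk) as Hiso'.
  split.
  - exists (k P), (k Q), (k S); split; [|rewrite Hiso'; assumption].
    rewrite <- (Hkh A), <- (Hkh B), <- (Hkh C), <- (Hkh U), <- (Hkh V).
    apply (wedged_candidate_map k h); assumption.
  - intros P' Q' S' H'; rewrite <- Hiso.
    apply (Hmax _ _ (h S')), (wedged_candidate_map h k); assumption.
Qed.

Lemma wedged_candidate_region A B C A' B' C' U V P Q S :
  (forall X, tri_region A B C X <-> tri_region A' B' C' X) ->
  wedged_candidate A B C U V P Q S -> wedged_candidate A' B' C' U V P Q S.
Proof.
  intros Hreg [He [Hsub Hseg]]; split; [assumption|split; [|assumption]].
  intros X HX; apply Hreg, Hsub, HX.
Qed.

Lemma max_wedged_side_region A B C A' B' C' U V s :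
  (forall X, tri_region A B C X <-> tri_region A' B' C' X) ->
  max_wedged_side A B C U V s -> max_wedged_side A' B' C' U V s.
Proof.
  intros Hreg [[P [Q [S [HPQS Hs]]]] Hmax]; split.
  - exists P, Q, S; split; [|assumption].
    apply (wedged_candidate_region A B C); assumption.
  - intros P' Q' S' H'; apply (Hmax P' Q' S').
    apply (wedged_candidate_region A' B' C'); [|assumption].
    intros X; symmetry; apply Hreg.
Qed.

Lemma wedged_candidate_sym A B C U V P Q S :
  wedged_candidate A B C U V P Q S -> wedged_candidate A B C V U P Q S.
Proof.
  intros [He [Hsub [HP HQ]]].
  split; [|split; [|split]]; try apply segment_sym; assumption.
Qed.

Lemma max_wedged_side_sym A B C U V s :
  max_wedged_side A B C U V s -> max_wedged_side A B C V U s.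
Proof.
  intros [[P [Q [S [HPQS Hs]]]] Hmax]; split.
  - exists P, Q, S; split; [apply wedged_candidate_sym|]; assumption.
  - intros P' Q' S' H'; apply (Hmax P' Q' S'), wedged_candidate_sym, H'.
Qed.

Lemma WET_of_max_wedged_side A B C U V s : max_wedged_side A B C U V s ->
  (exists P Q S, WET A B C U V P Q S) /\
  (forall P Q S, WET A B C U V P Q S ->
     dist P Q = s /\ dist Q S = s /\ dist S P = s).
Proof.
  intros [[P [Q [S [HPQS Hs]]]] Hmax].
  assert (Harea : forall P' Q' S', wedged_candidate A B C U V P' Q' S' ->
            area P' Q' S' = dist P' Q' ^ 2 * sqrt 3 / 4)
    by (intros P' Q' S' [He _]; apply area_equilateral, He).
  assert (Hs0 : 0 <= s) by (rewrite <- Hs; apply dist_ge0).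
  split.
  - exists P, Q, S; split; [assumption|].
    intros P' Q' S' H'; rewrite (Harea _ _ _ H'), (Harea _ _ _ HPQS), Hs.
    apply equilateral_area_le_iff; [apply dist_ge0|assumption|apply (Hmax _ _ _ H')].
  - intros P' Q' S' [H' Hge].
    specialize (Hge _ _ _ HPQS); rewrite (Harea _ _ _ H'), (Harea _ _ _ HPQS), Hs in Hge.
    apply (equilateral_area_le_iff _ _ Hs0 (dist_ge0 P' Q')) in Hge.
    pose proof (Hmax _ _ _ H') as Hle.
    destruct H' as [[_ [E1 E2]] _].
    lra.
Qed.

(** * Wedged triangles on the x-axis *)

Definition apex (s : R) : pt := (s / 2, s * sqrt 3 / 2).

Lemma cross_apex a p q s :
  cross (a, 0) (p, q) (apex s) = q * a - s * (q / 2 + (a - p) * sqrt 3 / 2).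
Proof. unfold cross, apex; cbn [fst snd]; field. Qed.

Lemma dist_x_axis u v : dist (u, 0) (v, 0) = Rabs (u - v).
Proof.
  apply sqr_inj; [apply dist_ge0|apply Rabs_pos|].
  rewrite dist_sqr, pow2_abs; simpl; ring.
Qed.

Lemma segment_x_axis a X : 0 <= a -> segment (0, 0) (a, 0) X -> snd X = 0 /\ 0 <= fst X <= a.
Proof. intros Ha [t [Ht [Hx Hy]]]; simpl in *; rewrite Hx, Hy; split; [ring|nra]. Qed.

Lemma equilateral_on_x_axis u v X : equilateral (u, 0) (v, 0) X -> 0 <= snd X ->
  fst X = (u + v) / 2 /\ snd X = dist (u, 0) (v, 0) * sqrt 3 / 2.
Proof.
  intros [Hs [E1 E2]] Hy.
  set (s := dist (u, 0) (v, 0)) in *.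
  assert (Huv : s ^ 2 = (u - v) ^ 2) by (unfold s; rewrite dist_sqr; simpl; ring).
  assert (HvX : s ^ 2 = (v - fst X) ^ 2 + snd X ^ 2) by (rewrite E1, dist_sqr; simpl; ring).
  assert (HXu : s ^ 2 = (fst X - u) ^ 2 + snd X ^ 2) by (rewrite E1, E2, dist_sqr; simpl; ring).
  assert (Hx : fst X = (u + v) / 2).
  { assert (Hprod : (v - u) * (v + u - 2 * fst X) = 0) by nra.
    apply Rmult_integral in Hprod; destruct Hprod; nra. }
  split; [assumption|].
  apply sqr_inj; [assumption|pose proof sqrt3_gt0; nra|].
  replace ((s * sqrt 3 / 2) ^ 2) with (s ^ 2 * sqrt 3 ^ 2 / 4) by field.
  rewrite sqrt3_sqr, Hx in *; nra.
Qed.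

Lemma equilateral_apex s : 0 < s -> equilateral (0, 0) (s, 0) (apex s).
Proof.
  intros Hs.
  assert (H1 : dist (0, 0) (s, 0) = s) by (rewrite dist_x_axis, Rabs_left; lra).
  assert (H2 : dist (s, 0) (apex s) = s).
  { apply sqr_inj; [apply dist_ge0|lra|].
    rewrite dist_sqr; unfold apex; cbn [fst snd].
    replace ((0 - s * sqrt 3 / 2) ^ 2) with (s ^ 2 * sqrt 3 ^ 2 / 4) by field.
    rewrite sqrt3_sqr; field. }
  assert (H3 : dist (apex s) (0, 0) = s).
  { apply sqr_inj; [apply dist_ge0|lra|].
    rewrite dist_sqr; unfold apex; cbn [fst snd].
    replace ((s * sqrt 3 / 2 - 0) ^ 2) with (s ^ 2 * sqrt 3 ^ 2 / 4) by field.
    rewrite sqrt3_sqr; field. }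
  unfold equilateral; lra.
Qed.

Section Model.

Variables a p q : R.
Hypotheses (Ha : 0 < a) (Hq : 0 < q).

Lemma model_region X :
  tri_region (0, 0) (a, 0) (p, q) X <->
  0 <= snd X /\ 0 <= cross (a, 0) (p, q) X /\ 0 <= q * fst X - p * snd X.
Proof.
  rewrite tri_region_cross by (unfold cross; simpl; nra).
  unfold cross; simpl.
  split; intros [H1 [H2 H3]]; repeat split; nra.
Qed.

Lemma model_candidate_bound P Q S :
  wedged_candidate (0, 0) (a, 0) (p, q) (0, 0) (a, 0) P Q S ->
  dist P Q <= a /\ 0 <= cross (a, 0) (p, q) (apex (dist P Q)).
Proof.
  intros [HPQS [Hsub [HP HQ]]].
  assert (HS : tri_region (0, 0) (a, 0) (p, q) S) by (apply Hsub; exists 0, 0, 1; simpl; lra).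
  apply model_region in HS; destruct HS as [Hy [HVW _]].
  apply segment_x_axis in HP; [|lra]; apply segment_x_axis in HQ; [|lra].
  destruct P as [u u'], Q as [v v']; simpl in HP, HQ.
  destruct HP as [-> HP], HQ as [-> HQ].
  destruct (equilateral_on_x_axis u v S HPQS Hy) as [Hx Hy'].
  rewrite cross_apex, dist_x_axis in *.
  unfold cross in HVW; simpl in HVW; rewrite Hx, Hy' in HVW.
  (* S is apex (dist P Q) translated by min u v >= 0 along the axis, towards the line VW. *)
  assert (Huv : Rabs (u - v) <= u + v) by (apply Rabs_le; lra).
  split; [apply Rabs_le; lra | nra].
Qed.

(* [p * sqrt 3 <= q]: the angle at the origin is at least 60 degrees, so the apex stays on the
   inner side of the line through the origin and (p, q). *)
Lemma model_candidate_apex s : p * sqrt 3 <= q -> 0 < s <= a ->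
  0 <= cross (a, 0) (p, q) (apex s) ->
  wedged_candidate (0, 0) (a, 0) (p, q) (0, 0) (a, 0) (0, 0) (s, 0) (apex s).
Proof.
  intros Hp Hs Hapex.
  pose proof sqrt3_gt0.
  split; [|split; [|split]].
  - apply equilateral_apex; lra.
  - intros X; apply tri_region_sub; apply model_region;
      unfold cross, apex in *; simpl in *; repeat split; nra.
  - exists 0; simpl; lra.
  - exists (s / a); cbn [fst snd].
    assert (s / a * a = s) by (field; lra).
    repeat split; nra.
Qed.

Lemma max_wedged_side_model s : p * sqrt 3 <= q -> 0 < s <= a ->
  0 <= cross (a, 0) (p, q) (apex s) ->
  s = a \/ cross (a, 0) (p, q) (apex s) = 0 ->
  max_wedged_side (0, 0) (a, 0) (p, q) (0, 0) (a, 0) s.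
Proof.
  intros Hp Hs Hapex Htight.
  split.
  - exists (0, 0), (s, 0), (apex s); split; [apply model_candidate_apex; assumption|].
    rewrite dist_x_axis, Rabs_left; lra.
  - intros P Q S H; apply model_candidate_bound in H; destruct H as [Hle Hslack].
    destruct Htight as [->|Hzero]; [assumption|].
    rewrite cross_apex in Hslack, Hzero.
    assert (0 < q / 2 + (a - p) * sqrt 3 / 2) by (pose proof sqrt3_gt0; nra).
    nra.
Qed.
End Model.

(** * Moving a side onto the x-axis *)

Section Frame.

Variables (U V : pt) (e : R).
Hypotheses (He : e * e = 1) (HUV : 0 < dist U V).

(* Coordinates of X in the orthonormal frame with origin U and first axis along UV;
   [e = 1] or [e = -1] chooses the orientation of the second axis. *)
Definition frame (X : pt) : pt :=
  (dotp U V X / dist U V, e * cross U V X / dist U V).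

Definition unframe (Y : pt) : pt :=
  (fst U + (fst Y * (fst V - fst U) - e * snd Y * (snd V - snd U)) / dist U V,
   snd U + (fst Y * (snd V - snd U) + e * snd Y * (fst V - fst U)) / dist U V).

Let HUV2 : dist U V ^ 2 = (fst V - fst U) ^ 2 + (snd V - snd U) ^ 2.
Proof. rewrite dist_sqr; ring. Qed.

Lemma frame_affine : affine_map frame.
Proof.
  exists ((fst V - fst U) / dist U V), ((snd V - snd U) / dist U V),
    (- e * (snd V - snd U) / dist U V), (e * (fst V - fst U) / dist U V),
    (dotp U V (0, 0) / dist U V), (e * cross U V (0, 0) / dist U V).
  intros X; unfold frame, dotp, cross; cbn [fst snd]; f_equal; field; lra.
Qed.

Lemma unframe_affine : affine_map unframe.
Proof.
  exists ((fst V - fst U) / dist U V), (- e * (snd V - snd U) / dist U V),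
    ((snd V - snd U) / dist U V), (e * (fst V - fst U) / dist U V), (fst U), (snd U).
  intros Y; unfold unframe; f_equal; field; lra.
Qed.

Lemma frame_isometry : isometry frame.
Proof.
  intros X Y; apply sqr_inj; [apply dist_ge0|apply dist_ge0|].
  rewrite !dist_sqr; unfold frame; cbn [fst snd].
  replace (e * cross U V X / dist U V - e * cross U V Y / dist U V)
    with (e * ((cross U V X - cross U V Y) / dist U V)) by (field; lra).
  assert (He2 : e ^ 2 = 1) by (rewrite <- He; ring).
  rewrite Rpow_mult_distr, He2, Rmult_1_l.
  transitivity (((fst V - fst U) ^ 2 + (snd V - snd U) ^ 2) *
                ((fst X - fst Y) ^ 2 + (snd X - snd Y) ^ 2) / dist U V ^ 2).
  - unfold dotp, cross; field; lra.
  - rewrite <- HUV2; field; lra.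
Qed.

Lemma unframe_frame X : unframe (frame X) = X.
Proof.
  destruct X as [x y]; unfold unframe, frame, dotp, cross; cbn [fst snd].
  set (dx := fst V - fst U) in *; set (dy := snd V - snd U) in *.
  set (c := dx * (y - snd U) - dy * (x - fst U)).
  f_equal.
  - transitivity (fst U + ((dx ^ 2 + dy ^ 2) * (x - fst U) + (1 - e * e) * dy * c)
                          / dist U V ^ 2); [unfold c; field; lra|].
    rewrite He, <- HUV2; field; lra.
  - transitivity (snd U + ((dx ^ 2 + dy ^ 2) * (y - snd U) - (1 - e * e) * dx * c)
                          / dist U V ^ 2); [unfold c; field; lra|].
    rewrite He, <- HUV2; field; lra.
Qed.

Lemma frame_unframe Y : frame (unframe Y) = Y.
Proof.
  destruct Y as [x y]; unfold unframe, frame, dotp, cross; cbn [fst snd].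
  set (dx := fst V - fst U) in *; set (dy := snd V - snd U) in *.
  f_equal.
  - transitivity ((dx ^ 2 + dy ^ 2) * x / dist U V ^ 2); [field; lra|].
    rewrite <- HUV2; field; lra.
  - transitivity (e * e * (dx ^ 2 + dy ^ 2) * y / dist U V ^ 2); [field; lra|].
    rewrite He, <- HUV2; field; lra.
Qed.

Lemma frame_origin : frame U = (0, 0).
Proof. unfold frame, dotp, cross; f_equal; field; lra. Qed.

Lemma frame_base : frame V = (dist U V, 0).
Proof.
  unfold frame, dotp, cross; f_equal.
  - transitivity (dist U V ^ 2 / dist U V); [rewrite HUV2|]; field; lra.
  - field; lra.
Qed.

End Frame.

Lemma sign_abs x : exists e, e * e = 1 /\ e * x = Rabs x.
Proof.
  destruct (Rle_or_lt 0 x).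
  - exists 1; rewrite Rabs_pos_eq by assumption; split; ring.
  - exists (-1); rewrite Rabs_left by assumption; split; ring.
Qed.

Lemma max_wedged_side_at_angle U V W t s :
  0 < dist U V -> 0 < dist U W -> angle V U W = t ->
  0 < sin t -> sqrt 3 * cos t <= sin t -> 0 < s <= dist U V ->
  0 <= cross (dist U V, 0) (dist U W * cos t, dist U W * sin t) (apex s) ->
  s = dist U V \/ cross (dist U V, 0) (dist U W * cos t, dist U W * sin t) (apex s) = 0 ->
  max_wedged_side U V W U V s.
Proof.
  intros HUV HUW Ht Hsin H60 Hs Hslack Htight.
  destruct (sign_abs (cross U V W)) as [e [He Hecross]].
  apply (max_wedged_side_map (frame U V e) (unframe U V e));
    [apply frame_affine | apply unframe_affine | apply frame_isometry
    | apply unframe_frame | apply frame_unframe | ]; try assumption.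
  assert (HW : frame U V e W = (dist U W * cos t, dist U W * sin t)).
  { unfold frame; rewrite Hecross, dotp_angle, abs_cross_angle, Ht by assumption.
    f_equal; field; lra. }
  rewrite frame_origin, frame_base, HW by assumption.
  apply max_wedged_side_model; try assumption; nra.
Qed.

(** * The triangle with angles 80, 80 and 20 degrees *)

Lemma cos80_pos : 0 < cos (4 * PI / 9).
Proof. pose proof PI_RGT_0; apply cos_gt_0; lra. Qed.

Lemma sin80_pos : 0 < sin (4 * PI / 9).
Proof. pose proof PI_RGT_0; apply sin_gt_0; lra. Qed.

Lemma cos80_lt_half : cos (4 * PI / 9) < 1 / 2.
Proof. pose proof PI_RGT_0; rewrite <- cos_PI3; apply cos_decreasing_1; lra. Qed.

Lemma sqrt3_cos80_lt_sin80 : sqrt 3 * cos (4 * PI / 9) < sin (4 * PI / 9).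
Proof.
  pose proof PI_RGT_0.
  assert (H20 : 0 < sin (4 * PI / 9 - PI / 3)) by (apply sin_gt_0; lra).
  rewrite sin_minus, sin_PI3, cos_PI3 in H20; lra.
Qed.

Lemma sin80_identity :
  sin (4 * PI / 9) * (1 - cos (4 * PI / 9)) = sqrt 3 / 2 * (1 - 2 * cos (4 * PI / 9) ^ 2).
Proof.
  assert (Hsin : sin (4 * PI / 9) = sin (PI / 9) / 2 + cos (PI / 9) * (sqrt 3 / 2)).
  { replace (4 * PI / 9) with (PI / 9 + PI / 3) by field.
    rewrite sin_plus, sin_PI3, cos_PI3; field. }
  assert (Hsin2 : 2 * sin (4 * PI / 9) * cos (4 * PI / 9) = sin (PI / 9)).
  { rewrite <- sin_2a, <- sin_PI_x; f_equal; field. }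
  assert (Hcos2 : 2 * cos (4 * PI / 9) * cos (4 * PI / 9) - 1 = - cos (PI / 9)).
  { rewrite <- cos_2a_cos, <- Rtrigo_facts.cos_pi_minus; f_equal; field. }
  nra.
Qed.

Lemma isosceles_of_base_angles A B C t :
  cross A B C <> 0 -> angle B A C = t -> angle A B C = t ->
  dist A C = dist B C /\ dist A B = 2 * dist A C * cos t.
Proof.
  intros Hcross HA HB.
  assert (HAB : 0 < dist A B) by (apply (dist_gt0_of_cross A B C), Hcross).
  assert (HAC : 0 < dist A C)
    by (apply (dist_gt0_of_cross A C B); unfold cross in *; lra).
  assert (HBC : 0 < dist B C)
    by (apply (dist_gt0_of_cross B C A); unfold cross in *; lra).
  assert (HBA : 0 < dist B A) by (rewrite dist_sym; assumption).
  pose proof (abs_cross_angle B A C HAB HAC) as SA.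
  pose proof (abs_cross_angle A B C HBA HBC) as SB.
  replace (cross B A C) with (- cross A B C) in SB by (unfold cross; ring).
  rewrite Rabs_Ropp, dist_sym, SA, HA, HB in SB.
  pose proof (Rabs_pos_lt _ Hcross) as Hpos; rewrite SA, HA in Hpos.
  assert (Hleg : dist A C = dist B C) by nra.
  split; [assumption|].
  pose proof (dotp_angle B A C HAB HAC) as CA.
  pose proof (dotp_angle A B C HBA HBC) as CB.
  rewrite HA in CA; rewrite HB, dist_sym, <- Hleg in CB.
  assert (Hsum : dotp A B C + dotp B A C = dist A B ^ 2)
    by (rewrite dist_sqr; unfold dotp; ring).
  nra.
Qed.

Lemma leg80_apex_on_opposite_side b :
  let c := 2 * b * cos (4 * PI / 9) in
  cross (b, 0) (c * cos (4 * PI / 9), c * sin (4 * PI / 9)) (apex c) = 0.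
Proof.
  intros c; rewrite cross_apex; unfold c.
  transitivity (2 * b ^ 2 * cos (4 * PI / 9) * (sin (4 * PI / 9) * (1 - cos (4 * PI / 9))
                - sqrt 3 / 2 * (1 - 2 * cos (4 * PI / 9) ^ 2))); [field|].
  rewrite sin80_identity; ring.
Qed.

Lemma base80_apex_inside b : 0 <= b ->
  let c := 2 * b * cos (4 * PI / 9) in
  0 <= cross (c, 0) (b * cos (4 * PI / 9), b * sin (4 * PI / 9)) (apex c).
Proof.
  intros Hb c; rewrite cross_apex; unfold c.
  match goal with |- 0 <= ?X =>
    replace X with (b ^ 2 * cos (4 * PI / 9) * (sin (4 * PI / 9) - sqrt 3 * cos (4 * PI / 9)))
      by field end.
  pose proof sqrt3_cos80_lt_sin80; pose proof cos80_pos.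
  apply Rmult_le_pos; [apply Rmult_le_pos|]; nra.
Qed.

Lemma max_wedged_side_leg80 U V W :
  0 < dist U V -> angle V U W = 4 * PI / 9 ->
  dist U W = 2 * dist U V * cos (4 * PI / 9) ->
  max_wedged_side U V W U V (dist U W).
Proof.
  intros HUV Ht HUW.
  pose proof cos80_pos; pose proof cos80_lt_half; pose proof sin80_pos.
  apply (max_wedged_side_at_angle U V W (4 * PI / 9)); rewrite ?HUW; try assumption.
  - nra.
  - apply Rlt_le, sqrt3_cos80_lt_sin80.
  - split; nra.
  - rewrite leg80_apex_on_opposite_side; lra.
  - right; apply leg80_apex_on_opposite_side.
Qed.

Lemma max_wedged_side_base80 U V W :
  0 < dist U W -> angle V U W = 4 * PI / 9 ->
  dist U V = 2 * dist U W * cos (4 * PI / 9) ->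
  max_wedged_side U V W U V (dist U V).
Proof.
  intros HUW Ht HUV.
  pose proof cos80_pos; pose proof sin80_pos.
  apply (max_wedged_side_at_angle U V W (4 * PI / 9)); try assumption.
  - nra.
  - apply Rlt_le, sqrt3_cos80_lt_sin80.
  - split; [nra|lra].
  - rewrite HUV; apply base80_apex_inside; lra.
  - left; reflexivity.
Qed.

Lemma congruent_of_sides P Q S P' Q' S' s :
  dist P Q = s /\ dist Q S = s /\ dist S P = s ->
  dist P' Q' = s /\ dist Q' S' = s /\ dist S' P' = s ->
  congruent P Q S P' Q' S'.
Proof.
  intros H H'; exists P', Q', S'; split; [left; reflexivity|lra].
Qed.

Theorem mainTheorem5 (A B C : pt) :
  cross A B C <> 0 ->
  angle B A C = 4 * PI / 9 ->
  angle A B C = 4 * PI / 9 ->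
  (exists P Q S, WET A B C B C P Q S) /\
  (exists P Q S, WET A B C C A P Q S) /\
  (exists P Q S, WET A B C A B P Q S) /\
  (forall P1 Q1 S1 P2 Q2 S2 P3 Q3 S3 : pt,
     WET A B C B C P1 Q1 S1 ->
     WET A B C C A P2 Q2 S2 ->
     WET A B C A B P3 Q3 S3 ->
     congruent P1 Q1 S1 P2 Q2 S2 /\ congruent P2 Q2 S2 P3 Q3 S3 /\
     congruent P1 Q1 S1 P3 Q3 S3).
Proof.
  intros Hcross HA HB.
  destruct (isosceles_of_base_angles A B C _ Hcross HA HB) as [Hleg Hbase].
  assert (HAC : 0 < dist A C) by (apply (dist_gt0_of_cross A C B); unfold cross in *; lra).
  assert (HBC : max_wedged_side A B C B C (dist A B)).
  { apply (max_wedged_side_region B C A); [intros X; symmetry; apply tri_region_rotate|].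
    rewrite dist_sym; apply max_wedged_side_leg80; [lra|rewrite angle_sym; assumption|].
    rewrite dist_sym, <- Hleg; assumption. }
  assert (HCA : max_wedged_side A B C C A (dist A B)).
  { apply max_wedged_side_sym, (max_wedged_side_region A C B);
      [intros X; symmetry; apply tri_region_swap|].
    apply max_wedged_side_leg80; [assumption|rewrite angle_sym; assumption|assumption]. }
  assert (HAB : max_wedged_side A B C A B (dist A B))
    by (apply max_wedged_side_base80; assumption).
  apply WET_of_max_wedged_side in HBC as [EBC DBC].
  apply WET_of_max_wedged_side in HCA as [ECA DCA].
  apply WET_of_max_wedged_side in HAB as [EAB DAB].
  split; [|split; [|split]]; try assumption.
  intros P1 Q1 S1 P2 Q2 S2 P3 Q3 S3 W1 W2 W3.
  split; [|split]; eapply congruent_of_sides; eauto.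
Qed.
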